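(* Let $\mathfrak{S}=(\mathcal{X},\mathsf{S},\gamma,(\Lambda_{a})_{a\in\mathcal{A}})$ be a spectral decomposition system for the Euclidean space $\mathfrak{H}$ with spectral-induced ordering mapping $\tau$, and let $\varphi\colon\mathcal{X}\to[-\infty,+\infty]$. Then: (i) $\varphi$ is $\mathsf{S}$-invariant $\Leftrightarrow$ $\varphi\circ\tau=\varphi$ $\Leftrightarrow$ $\varphi\circ\gamma\circ\Lambda_a=\varphi$ for every $a\in\mathcal{A}$; (ii) if $\varphi$ is $\mathsf{S}$-invariant, then $\operatorname{int}\operatorname{dom}(\varphi\circ\gamma)=\gamma^{-1}(\operatorname{int}\operatorname{dom}\varphi)$.
   Context: A Euclidean space is a finite-dimensional real inner product space; inner products are written $\langle\cdot,\cdot\rangle$ and norms $\|\cdot\|$. Let $\mathfrak{H}$ and $\mathcal{X}$ be Euclidean spaces, let $\mathsf{S}$ be a group acting on $\mathcal{X}$ by linear isometries, let $\gamma\colon\mathfrak{H}\to\mathcal{X}$, and let $(\Lambda_a)_{a\in\mathcal{A}}$ be a family of linear operators from $\mathcal{X}$ to $\mathfrak{H}$. The orbit of $x$ is $\mathsf{S}\cdot x=\{s\cdot x: s\in\mathsf{S}\}$; a map $f$ on $\mathcal{X}$ is $\mathsf{S}$-invariant if $f(s\cdot x)=f(x)$ for all $s,x$. The tuple is a spectral decomposition system for $\mathfrak{H}$ if: [A] every $\Lambda_a$ is an isometry; [B] there exists an $\mathsf{S}$-invariant $\tau\colon\mathcal{X}\to\mathcal{X}$ with $\tau(x)\in\mathsf{S}\cdot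 x$ for all $x$ and $\gamma\circ\Lambda_a=\tau$ for all $a$; [C] for every $X\in\mathfrak{H}$ there is $a$ with $X=\Lambda_a\gamma(X)$; [D] $\langle X,Y\rangle\leq\langle\gamma(X),\gamma(Y)\rangle$ for all $X,Y\in\mathfrak{H}$. The map $\tau$ in [B] is the spectral-induced ordering mapping. $\operatorname{dom}f=\{x: f(x)<+\infty\}$ and $\operatorname{int}$ denotes interior. *)

From HB Require Import structures.
From mathcomp Require Import all_boot all_order all_algebra.
From mathcomp Require Import all_classical all_reals all_analysis.
Set Implicit Arguments. Unset Strict Implicit. Unset Printing Implicit Defensive.
Import Order.TTheory GRing.Theory Num.Theory.
Import numFieldNormedType.Exports.
Local Open Scope classical_set_scope.
Local Open Scope ring_scope.

(* Euclidean space of dimension n: row vectors 'rV[R]_n with the standard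
   inner product (every finite-dimensional real inner product space is
   isometrically isomorphic to one of these). The topology is the library's
   (product/max-norm) topology on matrices, which coincides with the one
   induced by the Euclidean norm. *)
Definition dotv (R : realType) (n : nat) (u v : 'rV[R]_n) : R :=
  \sum_(i < n) u 0 i * v 0 i.

Definition is_linear (R : realType) (m n : nat) (f : 'rV[R]_m -> 'rV[R]_n) :=
  forall (c : R) (x y : 'rV[R]_m), f (c *: x + y) = c *: f x + f y.

Definition is_lin_isometry (R : realType) (m n : nat)
  (f : 'rV[R]_m -> 'rV[R]_n) :=
  is_linear f /\ forall x, dotv (f x) (f x) = dotv x x.

Definition group_action_by_lin_isometries (R : realType) (m : nat)
  (G : Type) (mul : G -> G -> G) (one : G) (inv : G -> G)
  (act : G -> 'rV[R]_m -> 'rV[R]_m) :=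
  [/\ (forall a b c, mul a (mul b c) = mul (mul a b) c),
      (forall a, mul one a = a /\ mul a one = a),
      (forall a, mul (inv a) a = one /\ mul a (inv a) = one),
      (forall x, act one x = x) &
      (forall a b x, act (mul a b) x = act a (act b x))] /\
  (forall a, is_lin_isometry (act a)).

Definition orbit (R : realType) (m : nat) (G : Type)
  (act : G -> 'rV[R]_m -> 'rV[R]_m) (x : 'rV[R]_m) : set 'rV[R]_m :=
  [set act s x | s in [set: G]].

Definition S_invariant (R : realType) (m : nat) (G : Type) (T : Type)
  (act : G -> 'rV[R]_m -> 'rV[R]_m) (f : 'rV[R]_m -> T) :=
  forall s x, f (act s x) = f x.

(* (X = 'rV_m, S = (G, act), gamma, (Lam a)_{a in A}) is a spectral
   decomposition system for H = 'rV_n, with spectral-induced ordering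
   mapping tau. *)
Definition spectral_decomposition_system_with (R : realType) (n m : nat)
  (G : Type) (mul : G -> G -> G) (one : G) (inv : G -> G)
  (act : G -> 'rV[R]_m -> 'rV[R]_m)
  (gamma : 'rV[R]_n -> 'rV[R]_m) (A : Type) (Lam : A -> 'rV[R]_m -> 'rV[R]_n)
  (tau : 'rV[R]_m -> 'rV[R]_m) :=
  [/\ group_action_by_lin_isometries mul one inv act,
      (forall a, is_linear (Lam a) /\
                           forall x, dotv (Lam a x) (Lam a x) = dotv x x),
      [/\ S_invariant act tau,
                    (forall x, orbit act x (tau x)) &
                    (forall a, gamma \o Lam a = tau)],
      (forall X : 'rV[R]_n, exists a, X = Lam a (gamma X)) &
      (forall X Y : 'rV[R]_n, dotv X Y <= dotv (gamma X) (gamma Y))].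

Definition edom (T : Type) (R : realType) (f : T -> \bar R) : set T :=
  [set x | (f x < +oo)%E].

From Pilot Require Import Defs.
From HB Require Import structures.
From mathcomp Require Import all_boot all_order all_algebra.
From mathcomp Require Import all_classical all_reals all_analysis.
From mathcomp Require Import ring lra.
Set Implicit Arguments. Unset Strict Implicit. Unset Printing Implicit Defensive.
Import Order.TTheory GRing.Theory Num.Theory.
Import numFieldNormedType.Exports.
Local Open Scope classical_set_scope.
Local Open Scope ring_scope.

(* Idea: since tau x lies in the orbit of x and tau is S-invariant, phi is
   S-invariant iff phi = phi o tau, and tau = gamma o Lam_a.  For (ii), gamma
   and every Lam_a are nonexpansive for the Euclidean norm: Lam_a is a linear
   isometry, and gamma preserves norms ([A] and [C]) while increasing inner
   products ([D]).  Hence both are continuous, so gamma^-1 (int dom phi) lies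
   in int dom (phi o gamma); conversely X = Lam_a (gamma X) for some a, and
   Lam_a pulls dom (phi o gamma) back to dom (phi o gamma o Lam_a) = dom phi. *)

Section EuclideanVsMaxNorm.
Variables (R : realType) (p : nat).
Implicit Types u v : 'rV[R]_p.

Lemma dotv_ge0 u : 0 <= dotv u u.
Proof. by apply: sumr_ge0 => i _; rewrite -expr2 sqr_ge0. Qed.

Lemma sqr_mxentry_le_dotv u j : u 0 j ^+ 2 <= dotv u u.
Proof.
rewrite /dotv (bigD1 j) //= -expr2 lerDl sumr_ge0 // => i _.
by rewrite -expr2 sqr_ge0.
Qed.

Lemma mxentry_le_norm u j : `|u 0 j| <= `|u|.
Proof.
by rewrite [leRHS]/Num.Def.normr /= mx_normrE; apply/bigmax_geP; right; exists (0, j).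
Qed.

Lemma sqr_norm_le_dotv u : `|u| ^+ 2 <= dotv u u.
Proof.
rewrite [`|u|]/Num.Def.normr /=.
have [->|/mx_norm_neq0 [[i j] ->]] := eqVneq (mx_norm u) 0.
  by rewrite expr0n dotv_ge0.
by rewrite /= ord1 real_normK ?num_real // sqr_mxentry_le_dotv.
Qed.

Lemma dotv_le_sqr_norm u : dotv u u <= p%:R * `|u| ^+ 2.
Proof.
rewrite mulr_natl; apply: le_trans (_ : \sum_(i < p) `|u| ^+ 2 <= _).
  apply: ler_sum => i _.
  rewrite -expr2 -real_normK ?num_real // lerXn2r ?nnegrE //.
  exact: mxentry_le_norm.
by rewrite sumr_const card_ord.
Qed.

Lemma dotvBB u v : dotv (u - v) (u - v) = dotv u u + dotv v v - 2 * dotv u v.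
Proof.
rewrite /dotv (eq_bigr (fun i => u 0 i * u 0 i + v 0 i * v 0 i
   - 2 * (u 0 i * v 0 i))); last by move=> i _; rewrite !mxE; ring.
by rewrite sumrB big_split mulr_sumr.
Qed.

End EuclideanVsMaxNorm.

Lemma continuous_preimage_interior (T U : topologicalType) (f : T -> U)
    (B : set U) :
  continuous f -> f @^-1` B° `<=` (f @^-1` B)°.
Proof. by move=> fc x Bfx; apply: fc. Qed.

Lemma lipschitz_continuous (K : realFieldType) (V W : normedModType K)
    (k : K) (f : V -> W) :
  0 < k -> (forall x y, `|f x - f y| <= k * `|x - y|) -> continuous f.
Proof.
move=> k0 fk x; apply/cvgrPdist_lt => e e0.
near=> y; rewrite (le_lt_trans (fk x y)) // -ltr_pdivlMl // mulrC.
near: y; apply: cvgr_dist_lt; [exact: cvg_id | by rewrite divr_gt0].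
Unshelve. all: by end_near. Qed.

Definition dotv_nonexpansive (R : realType) (p q : nat)
    (f : 'rV[R]_p -> 'rV[R]_q) :=
  forall x y, dotv (f x - f y) (f x - f y) <= dotv (x - y) (x - y).

Section Nonexpansive.
Variables (R : realType) (p q : nat).
Implicit Types f : 'rV[R]_p -> 'rV[R]_q.

(* The constant [p + 1] replaces the optimal [sqrt p] to avoid square roots. *)
Lemma dotv_nonexpansive_lipschitz f : dotv_nonexpansive f ->
  forall x y, `|f x - f y| <= (p%:R + 1) * `|x - y|.
Proof.
move=> fne x y; rewrite -(@ler_pXn2r _ 2) ?nnegrE ?mulr_ge0 ?addr_ge0 //.
have p1 : p%:R <= (p%:R + 1) ^+ 2 :> R.
  have p0 : 0 <= p%:R :> R by [].
  nra.
rewrite (le_trans (sqr_norm_le_dotv _)) ?(le_trans (fne x y)) //.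
rewrite (le_trans (dotv_le_sqr_norm _)) // exprMn ler_wpM2r ?sqr_ge0 //.
Qed.

Lemma dotv_nonexpansive_continuous f : dotv_nonexpansive f -> continuous f.
Proof.
move=> /dotv_nonexpansive_lipschitz; apply: lipschitz_continuous.
by rewrite ltr_wpDl.
Qed.

Lemma lin_isometry_dotv_nonexpansive f :
  is_lin_isometry f -> dotv_nonexpansive f.
Proof.
move=> [flin fiso] x y; suff -> : f x - f y = f (x - y) by rewrite fiso.
by rewrite [x - y]addrC -[- y]scaleN1r flin scaleN1r addrC.
Qed.

Lemma dotv_nonexpansive_of_dotv_le f :
    (forall x, dotv (f x) (f x) = dotv x x) ->
    (forall x y, dotv x y <= dotv (f x) (f y)) ->
  dotv_nonexpansive f.
Proof. by move=> fiso fle x y; rewrite !dotvBB !fiso lerD2l lerN2 ler_wpM2l. Qed.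

End Nonexpansive.

Section InvariantFunctions.
Variables (R : realType) (m : nat) (G T : Type).
Variables (act : G -> 'rV[R]_m -> 'rV[R]_m) (tau : 'rV[R]_m -> 'rV[R]_m).
Hypotheses (tau_inv : S_invariant act tau)
  (tau_orbit : forall x, Defs.orbit act x (tau x)).

Lemma S_invariant_iff_comp_tau (phi : 'rV[R]_m -> T) :
  S_invariant act phi <-> phi \o tau = phi.
Proof.
split=> [phi_inv|phi_tau s x].
  by apply/funext => x /=; have [s _ <-] := tau_orbit x; apply: phi_inv.
by rewrite -[in LHS]phi_tau -[in RHS]phi_tau /= tau_inv.
Qed.

End InvariantFunctions.

Lemma comp_tau_iff_comp_Lam (R : realType) (n m : nat) (T A : Type)
    (gamma : 'rV[R]_n -> 'rV[R]_m) (Lam : A -> 'rV[R]_m -> 'rV[R]_n)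
    (tau : 'rV[R]_m -> 'rV[R]_m) (phi : 'rV[R]_m -> T) :
  inhabited A -> (forall a, gamma \o Lam a = tau) ->
  phi \o tau = phi <-> forall a, phi \o gamma \o Lam a = phi.
Proof.
move=> [a0] gLam; split=> [phi_tau a|phi_gLam]; first by rewrite -compA gLam.
by rewrite -(gLam a0); apply: phi_gLam.
Qed.

Lemma spectral_dotv_gamma (R : realType) (n m : nat) (A : Type)
    (gamma : 'rV[R]_n -> 'rV[R]_m) (Lam : A -> 'rV[R]_m -> 'rV[R]_n) :
  (forall a x, dotv (Lam a x) (Lam a x) = dotv x x) ->
  (forall X, exists a, X = Lam a (gamma X)) ->
  forall X, dotv (gamma X) (gamma X) = dotv X X.
Proof. by move=> Lam_iso decomp X; have [a {3 4}->] := decomp X. Qed.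

Theorem proposition4p4 (R : realType) (n m : nat)
  (G : Type) (mul : G -> G -> G) (one : G) (inv : G -> G)
  (act : G -> 'rV[R]_m -> 'rV[R]_m)
  (gamma : 'rV[R]_n -> 'rV[R]_m) (A : Type) (Lam : A -> 'rV[R]_m -> 'rV[R]_n)
  (tau : 'rV[R]_m -> 'rV[R]_m)
  (Hsds : spectral_decomposition_system_with mul one inv act gamma Lam tau)
  (phi : 'rV[R]_m -> \bar R) :
  ((S_invariant act phi <-> phi \o tau = phi) /\
   (phi \o tau = phi <-> forall a, phi \o gamma \o Lam a = phi)) /\
  (S_invariant act phi ->
     interior (edom (phi \o gamma)) = gamma @^-1` interior (edom phi)).
Proof.
case: Hsds => _ Lam_iso [tau_inv tau_orbit gLam] decomp gamma_dotv_ge.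
have A0 : inhabited A by have [a _] := decomp 0; exists.
have tau_iff := comp_tau_iff_comp_Lam phi A0 gLam.
have inv_iff := S_invariant_iff_comp_tau tau_inv tau_orbit phi.
split=> // /inv_iff /tau_iff phi_gLam.
have gamma_cont : continuous gamma.
  apply/dotv_nonexpansive_continuous/dotv_nonexpansive_of_dotv_le => //.
  by apply: spectral_dotv_gamma decomp => a; case: (Lam_iso a).
have Lam_cont a : continuous (Lam a).
  exact/dotv_nonexpansive_continuous/lin_isometry_dotv_nonexpansive.
apply/seteqP; split=> X; last exact: continuous_preimage_interior.
have [a {1}->] := decomp X.
move/(continuous_preimage_interior (Lam_cont a)).
have -> // : Lam a @^-1` edom (phi \o gamma) = edom phi.
by rewrite -[in RHS](phi_gLam a).
Qed.
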